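(* Let $R$ be a commutative ring, $\Gamma$ an EI-category with endofunctor $\phi$, and let $f\colon C\to C\circ\phi$ and $g\colon D\to D\circ\phi$ be $\phi$-endomorphisms of finite free $R\Gamma$-chain complexes. If $h\colon C\to D$ is a chain homotopy equivalence with $g h=(h\circ\phi) f$, then $u(f)=u(g)$ in $U(R,\Gamma,\phi)$.
   Context: EI-category: small category in which every endomorphism is an isomorphism. $R\Gamma$-modules are contravariant functors $\Gamma\to R$-modules; finitely generated free ones are isomorphic to finite sums of $R\Gamma(?,x)=R[\mathrm{Mor}_\Gamma(?,x)]$. $U(R,\Gamma,\phi)$ is $K_0$ of the exact category whose objects are natural transformations $g\colon M\to M\circ\phi$ with $M$ finitely generated free and whose morphisms $g\to g'$ are $\tau\colon M\to M'$ with $g'\tau=(\tau\circ\phi)g$. For a chain map $f\colon C\to C\circ\phi$ of finite free chain complexes, $u(f)=\sum_n(-1)^n[f_n]$. *)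

From HB Require Import structures.
From mathcomp Require Import all_boot all_algebra.
From Stdlib Require List.
From Stdlib Require Import Permutation.

Set Implicit Arguments.
Unset Strict Implicit.
Unset Printing Implicit Defensive.
Import GRing.Theory.
Local Open Scope ring_scope.

Record EICategory := {
  Ob : Type;
  Hom : Ob -> Ob -> Type;
  idm : forall x, Hom x x;
  cmp : forall x y z, Hom y z -> Hom x y -> Hom x z;
  cmp_idl : forall x y (a : Hom x y), cmp (idm y) a = a;
  cmp_idr : forall x y (a : Hom x y), cmp a (idm x) = a;
  cmp_assoc : forall w x y z (a : Hom y z) (b : Hom x y) (c : Hom w x),
      cmp a (cmp b c) = cmp (cmp a b) c;
  ei_axiom : forall x (e : Hom x x), exists e' : Hom x x,
      cmp e e' = idm x /\ cmp e' e = idm x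
}.

Record Endofunctor (G : EICategory) := {
  fob : Ob G -> Ob G;
  fmor : forall x y, @Hom G x y -> @Hom G (fob x) (fob y);
  fmor_id : forall x, fmor (idm x) = idm (fob x);
  fmor_cmp : forall x y z (a : @Hom G y z) (b : @Hom G x y),
      fmor (cmp a b) = cmp (fmor a) (fmor b)
}.

Section Modules.
Variables (R : comPzRingType) (G : EICategory).

Definition lin (U V : lmodType R) (f : U -> V) : Prop :=
  forall (a : R) (u v : U), f (a *: u + v) = a *: f u + f v.

(* RG-modules: contravariant functors G -> R-modules *)
Record RGmod := {
  mob : Ob G -> lmodType R;
  mact : forall x y, @Hom G y x -> mob x -> mob y;
  mact_lin : forall x y (a : @Hom G y x), lin (mact a);
  mact_id : forall x (m : mob x), mact (idm x) m = m;
  mact_cmp : forall x y z (a : @Hom G y x) (b : @Hom G z y) (m : mob x),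
      mact (cmp a b) m = mact b (mact a m)
}.
Arguments mact r {x y}.

Definition natural (M N : RGmod) (t : forall x, mob M x -> mob N x) : Prop :=
  (forall x, lin (t x)) /\
  forall x y (a : @Hom G y x) (m : mob M x), t y (mact M a m) = mact N a (t x m).

(* M is finitely generated free, i.e. isomorphic to a finite sum
   \oplus_{i<k} R G(?, x_i) = \oplus_{i<k} R[Mor(?, x_i)]: there are b_i in M(x_i)
   such that for every y the elements M(a)(b_i), (i, a : y -> x_i), form an
   R-basis of M(y).  (This is what the isomorphism unfolds to via Yoneda.) *)
Definition is_basis (V : lmodType R) (I : Type) (v : I -> V) : Prop :=
  (forall m : V, exists (s : seq I) (c : I -> R), m = \sum_(j <- s) c j *: v j) /\
  (forall (s : seq I) (c : I -> R), List.NoDup s ->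
      \sum_(j <- s) c j *: v j = 0 -> forall j, List.In j s -> c j = 0).

Definition fg_free (M : RGmod) : Prop :=
  exists (k : nat) (xs : 'I_k -> Ob G) (b : forall i, mob M (xs i)),
    forall y, is_basis (fun p : {i : 'I_k & @Hom G y (xs i)} =>
                          mact M (projT2 p) (b (projT1 p))).

Variable phi : Endofunctor G.

Definition phi_natural (M : RGmod) (g : forall x, mob M x -> mob M (fob phi x)) : Prop :=
  (forall x, lin (g x)) /\
  forall x y (a : @Hom G y x) (m : mob M x), g y (mact M a m) = mact M (fmor phi a) (g x m).

(* objects of the exact category defining U(R, G, phi) *)
Record PhiEnd := {
  pe_mod : RGmod;
  pe_free : fg_free pe_mod;
  pe_map : forall x, mob pe_mod x -> mob pe_mod (fob phi x);
  pe_nat : phi_natural pe_map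
}.

Definition pe_hom (E E' : PhiEnd)
    (tau : forall x, mob (pe_mod E) x -> mob (pe_mod E') x) : Prop :=
  natural tau /\
  forall x (m : mob (pe_mod E) x), pe_map (tau x m) = tau (fob phi x) (pe_map m).

Definition pe_iso (E E' : PhiEnd) : Prop :=
  exists (tau : forall x, mob (pe_mod E) x -> mob (pe_mod E') x)
         (sig : forall x, mob (pe_mod E') x -> mob (pe_mod E) x),
    pe_hom tau /\ pe_hom sig /\
    (forall x m, sig x (tau x m) = m) /\ (forall x m, tau x (sig x m) = m).

Definition pe_ses (A B C : PhiEnd)
    (tau : forall x, mob (pe_mod A) x -> mob (pe_mod B) x)
    (sig : forall x, mob (pe_mod B) x -> mob (pe_mod C) x) : Prop :=
  pe_hom tau /\ pe_hom sig /\
  forall x, injective (tau x) /\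
            (forall c, exists b, sig x b = c) /\
            (forall b, sig x b = 0 <-> exists a, tau x a = b).

(* K_0 of this exact category: formal Z-combinations of objects (a list of
   signed objects; true = +, false = -) modulo the congruence generated by the
   abelian group laws, isomorphism invariance and [B] = [A] + [C] for short
   exact sequences.  K0eq l l' means l and l' define the same element of
   U(R, G, phi). *)
Inductive K0eq : seq (bool * PhiEnd) -> seq (bool * PhiEnd) -> Prop :=
| K0_refl l : K0eq l l
| K0_sym l l' : K0eq l l' -> K0eq l' l
| K0_trans l1 l2 l3 : K0eq l1 l2 -> K0eq l2 l3 -> K0eq l1 l3
| K0_perm l l' : Permutation l l' -> K0eq l l'
| K0_app l1 l2 l3 l4 : K0eq l1 l2 -> K0eq l3 l4 -> K0eq (l1 ++ l3) (l2 ++ l4)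
| K0_cancel E : K0eq [:: (true, E); (false, E)] [::]
| K0_iso E E' : pe_iso E E' -> K0eq [:: (true, E)] [:: (true, E')]
| K0_ses A B C tau sig : @pe_ses A B C tau sig ->
    K0eq [:: (true, B)] [:: (true, A); (true, C)].

End Modules.

Arguments mact {R G} r {x y}.

Section Complexes.
Variables (R : comPzRingType) (G : EICategory).

Local Unset Implicit Arguments.
Record Complex := {
  cmod : int -> RGmod R G;
  cfree : forall n, fg_free (cmod n);
  cd : forall n x, mob (cmod (n + 1)) x -> mob (cmod n) x;
  cd_nat : forall n, natural (cd n);
  cdd : forall n x (m : mob (cmod (n + 1 + 1)) x), cd n x (cd (n + 1) x m) = 0;
  cbound : nat;
  cbound_spec : forall n : int, (n < - (cbound%:Z) \/ cbound%:Z < n) ->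
      forall x (m : mob (cmod n) x), m = 0
}.
Local Set Implicit Arguments.

Definition cmap_type (C D : Complex) :=
  forall n x, mob (cmod C n) x -> mob (cmod D n) x.

Definition chain_map (C D : Complex) (h : cmap_type C D) : Prop :=
  (forall n, natural (h n)) /\
  forall n x (m : mob (cmod C (n + 1)) x), h n x (cd C n x m) = cd D n x (h (n + 1) x m).

Definition homotopy_type (C D : Complex) :=
  forall n x, mob (cmod C n) x -> mob (cmod D (n + 1)) x.

Definition chain_homotopic (C D : Complex) (k l : cmap_type C D) : Prop :=
  exists s : homotopy_type C D, (forall n, natural (s n)) /\
    forall n x (m : mob (cmod C (n + 1)) x),
      k (n + 1) x m - l (n + 1) x m = cd D (n + 1) x (s (n + 1) x m) + s n x (cd C n x m).

Definition chain_hequiv (C D : Complex) (h : cmap_type C D) : Prop :=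
  chain_map h /\ exists k : cmap_type D C, chain_map k /\
    chain_homotopic (fun n x m => k n x (h n x m)) (fun n x m => m) /\
    chain_homotopic (fun n x m => h n x (k n x m)) (fun n x m => m).

Variable phi : Endofunctor G.

Definition phi_cmap_type (C : Complex) :=
  forall n x, mob (cmod C n) x -> mob (cmod C n) (fob phi x).

Definition phi_chain_map (C : Complex) (f : phi_cmap_type C) : Prop :=
  (forall n, phi_natural (f n)) /\
  forall n x (m : mob (cmod C (n + 1)) x),
    f n x (cd C n x m) = cd C n (fob phi x) (f (n + 1) x m).

Definition pe_of (C : Complex) (f : phi_cmap_type C) (Hf : phi_chain_map f)
    (n : int) : @PhiEnd R G phi :=
  @Build_PhiEnd R G phi (cmod C n) (cfree C n) (f n) (proj1 Hf n).

(* u(f) = sum_n (-1)^n [f_n], the sum over n in [-cbound, cbound] *)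
Definition u_of (C : Complex) (f : phi_cmap_type C) (Hf : phi_chain_map f)
    : seq (bool * @PhiEnd R G phi) :=
  [seq (~~ odd (absz n), pe_of Hf n)
    | n <- [seq (i%:Z - (cbound C)%:Z)%R | i <- iota 0 (2 * cbound C).+1]].

End Complexes.

Arguments cmod {R G} c n.
Arguments cd {R G} c n x.
Arguments cbound {R G} c.
Arguments cfree {R G} c n.

(* Since [g h = h f], the maps [g] and [f] assemble into a diagonal phi-endomorphism of the
   mapping cone [D_(n+1) + C_n] of [h]; splitting off the summands degreewise shows that its
   [u] is [u f - u g]. The cone of a homotopy equivalence is contractible, and [u] vanishes
   on contractible finite free phi-complexes: if [s] is a contraction of [E], then
   [E_1 <- E_2 + E_0 <- E_3 <- ...], with differential [(p, q) |-> d p + s q] out of degree 1,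
   is again a contractible phi-complex, one degree shorter and with [u] of the opposite sign,
   so induction on the length reduces to length at most 1, where [d] is an isomorphism. *)

From HB Require Import structures.
From mathcomp Require Import all_boot all_algebra zify.
From Stdlib Require Import Permutation FinFun.

Set Implicit Arguments.
Unset Strict Implicit.
Unset Printing Implicit Defensive.
Import GRing.Theory.
Local Open Scope ring_scope.

Section Linear.
Variables (R : comPzRingType) (U V : lmodType R).

Lemma lin_of_morph (f : U -> V) :
  {morph f : u v / u + v} -> (forall a, {morph f : u / a *: u}) -> lin f.
Proof. by move=> fD fZ a u v; rewrite fD fZ. Qed.

Variables (f : U -> V) (f_lin : lin f).

Lemma linD u v : f (u + v) = f u + f v.
Proof. by have := f_lin 1 u v; rewrite !scale1r. Qed.

Lemma lin0 : f 0 = 0.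
Proof. by apply: (addrI (f 0)); rewrite -linD !addr0. Qed.

Lemma linZ a u : f (a *: u) = a *: f u.
Proof. by have := f_lin a u 0; rewrite !addr0 lin0 addr0. Qed.

Lemma linN u : f (- u) = - f u.
Proof. by apply/eqP; rewrite -subr_eq0 opprK -linD addNr lin0. Qed.

Lemma linB u v : f (u - v) = f u - f v.
Proof. by rewrite linD linN. Qed.

End Linear.

Section K0Algebra.
Variables (R : comPzRingType) (G : EICategory) (phi : Endofunctor G).
Notation PE := (@PhiEnd R G phi).
Notation K0 := (@K0eq R G phi).

Definition negl (l : seq (bool * PE)) := [seq (~~ p.1, p.2) | p <- l].

Lemma neglK : involutive negl.
Proof. by elim=> [|[b E] l IH] //=; rewrite negbK IH. Qed.

Lemma K0_catl l l1 l2 : K0 l1 l2 -> K0 (l ++ l1) (l ++ l2).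
Proof. by move=> H; apply: K0_app => //; apply: K0_refl. Qed.

Lemma K0_catr l l1 l2 : K0 l1 l2 -> K0 (l1 ++ l) (l2 ++ l).
Proof. by move=> H; apply: K0_app => //; apply: K0_refl. Qed.

Lemma K0_cat_nil l l' : K0 l [::] -> K0 (l' ++ l) l'.
Proof. by move=> H; rewrite -{2}(cats0 l'); apply: K0_catl. Qed.

Lemma K0_pair b E : K0 [:: (b, E); (~~ b, E)] [::].
Proof.
case: b; first exact: K0_cancel.
by apply: K0_trans (K0_cancel E); apply/K0_perm/perm_swap.
Qed.

Lemma K0_cat_negl l : K0 (l ++ negl l) [::].
Proof.
elim: l => [|[b E] l IH] /=; first exact: K0_refl.
apply: (@K0_trans _ _ _ _ ([:: (b, E); (~~ b, E)] ++ (l ++ negl l))).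
  by apply/K0_perm/perm_skip/Permutation_sym/Permutation_middle.
exact: K0_app (K0_pair b E) IH.
Qed.

Lemma K0_negl l l' : K0 l l' -> K0 (negl l) (negl l').
Proof.
move=> H.
apply: (@K0_trans _ _ _ _ (negl l ++ (l' ++ negl l'))).
  by apply/K0_sym/K0_cat_nil/K0_cat_negl.
apply: (@K0_trans _ _ _ _ (negl l ++ (l ++ negl l'))).
  exact/K0_catl/K0_catr/K0_sym.
apply: (@K0_trans _ _ _ _ ((l ++ negl l) ++ negl l')).
  by apply: K0_perm; rewrite catA; apply/Permutation_app_tail/Permutation_app_comm.
exact: K0_catr (K0_cat_negl l).
Qed.

Lemma K0_of_sub0 l l' : K0 (l ++ negl l') [::] -> K0 l l'.
Proof.
move=> H.
apply: (@K0_trans _ _ _ _ (l ++ (negl l' ++ l'))).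
  by apply/K0_sym/K0_cat_nil; rewrite -{2}(neglK l'); apply: K0_cat_negl.
by rewrite catA; apply: (K0_catr l' H).
Qed.

Lemma K0_flatten (T : Type) (F F' : T -> seq (bool * PE)) s :
  (forall x, K0 (F x) (F' x)) -> K0 (flatten (map F s)) (flatten (map F' s)).
Proof. by move=> H; elim: s => [|x s IH] /=; [apply: K0_refl | apply: K0_app]. Qed.

Lemma perm_flatten_pairs (T : Type) (F F' : T -> bool * PE) s :
  Permutation (flatten [seq [:: F x; F' x] | x <- s]) (map F s ++ map F' s).
Proof.
elim: s => [|x s IH] //=; apply/perm_skip/(Permutation_trans _ (Permutation_middle _ _ _)).
exact: perm_skip.
Qed.

End K0Algebra.

Section Basis.
Variable R : comPzRingType.

Lemma eq_basis (V : lmodType R) (I : Type) (v v' : I -> V) :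
  v =1 v' -> is_basis v -> is_basis v'.
Proof.
move=> E [span indep]; split.
  by move=> m; have [s [c ->]] := span m; exists s, c; apply: eq_bigr => i _; rewrite E.
move=> s c Hs Hz; apply: indep => //.
by rewrite (eq_bigr (fun j => c j *: v' j)) // => i _; rewrite E.
Qed.

Lemma basis_reindex (V : lmodType R) (I J : Type) (v : I -> V)
    (e : J -> I) (e' : I -> J) :
  cancel e' e -> cancel e e' -> is_basis v -> is_basis (v \o e).
Proof.
move=> e'K eK [span indep]; split.
  move=> m; have [s [c ->]] := span m; exists (map e' s), (c \o e).
  by rewrite big_map; apply: eq_bigr => i _ /=; rewrite e'K.
move=> s c Hs Hz j Hj.
rewrite -[j]eK; apply: (indep (map e s) (c \o e')).
- by apply: Injective_map_NoDup => // a b /(congr1 e'); rewrite !eK.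
- by rewrite big_map (eq_bigr (fun j => c j *: v (e j))) // => i _ /=; rewrite eK.
- exact: List.in_map.
Qed.

Lemma NoDup_pmap (I J : Type) (f : I -> option J) (s : seq I) :
  (forall a b c, f a = Some c -> f b = Some c -> a = b) ->
  List.NoDup s -> List.NoDup (pmap f s).
Proof.
move=> f_inj; elim: s => [|x s IH] /= Hs; first by constructor.
inversion Hs as [|? ? xNs Hs']; subst.
case fx: (f x) => [c|] /=; last exact: IH.
constructor; last exact: IH.
move=> Hc; apply: xNs; elim: s Hc {Hs Hs' IH} => [|y s IHs] //=.
case fy: (f y) => [d|] /=; last by move/IHs; right.
by case=> [dc|/IHs]; [left; apply: (f_inj _ _ d fy); rewrite dc | right].
Qed.

Lemma In_pmap (I J : Type) (f : I -> option J) (s : seq I) x c :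
  f x = Some c -> List.In x s -> List.In c (pmap f s).
Proof.
move=> fx; elim: s => [|y s IH] //= [->|/IH H]; first by rewrite fx; left.
by case: (f y) => //= d; right.
Qed.

Definition getl (I1 I2 : Type) (p : I1 + I2) : option I1 :=
  if p is inl i then Some i else None.
Definition getr (I1 I2 : Type) (p : I1 + I2) : option I2 :=
  if p is inr i then Some i else None.

Section SumIndex.
Variables (V : zmodType) (I1 I2 : Type) (s : seq (I1 + I2)) (F : I1 + I2 -> V).

Lemma big_getl : (forall i, F (inr i) = 0) ->
  \sum_(p <- s) F p = \sum_(i <- pmap (@getl I1 I2) s) F (inl i).
Proof.
move=> Fr; elim: s => [|[i|i] s' IH] /=; rewrite ?big_nil ?big_cons ?IH //.
by rewrite Fr add0r.
Qed.

Lemma big_getr : (forall i, F (inl i) = 0) ->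
  \sum_(p <- s) F p = \sum_(i <- pmap (@getr I1 I2) s) F (inr i).
Proof.
move=> Fl; elim: s => [|[i|i] s' IH] /=; rewrite ?big_nil ?big_cons ?IH //.
by rewrite Fl add0r.
Qed.

End SumIndex.

Lemma big_fst (V W : nmodType) (I : Type) (s : seq I) (F : I -> V * W) :
  (\sum_(i <- s) F i).1 = \sum_(i <- s) (F i).1.
Proof. by elim: s => [|x s IH]; rewrite ?big_nil // !big_cons -IH. Qed.

Lemma big_snd (V W : nmodType) (I : Type) (s : seq I) (F : I -> V * W) :
  (\sum_(i <- s) F i).2 = \sum_(i <- s) (F i).2.
Proof. by elim: s => [|x s IH]; rewrite ?big_nil // !big_cons -IH. Qed.

Definition basis_sum_fun (V W : lmodType R) (I1 I2 : Type) (v : I1 -> V)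
    (w : I2 -> W) (p : I1 + I2) : (V * W)%type :=
  match p with inl i => (v i, 0) | inr i => (0, w i) end.

Lemma basis_sum (V W : lmodType R) (I1 I2 : Type) (v : I1 -> V) (w : I2 -> W) :
  is_basis v -> is_basis w -> is_basis (basis_sum_fun v w).
Proof.
move=> [span1 indep1] [span2 indep2]; split.
  move=> [m1 m2]; have [s1 [c1 ->]] := span1 m1; have [s2 [c2 ->]] := span2 m2.
  exists (map inl s1 ++ map inr s2), (fun p => match p with inl i => c1 i | inr i => c2 i end).
  rewrite big_cat !big_map; apply: injective_projections => /=; rewrite !(big_fst, big_snd) /=.
    by rewrite [X in _ + X]big1 ?addr0 // => j _; apply: scaler0.
  by rewrite [X in X + _]big1 ?add0r // => j _; apply: scaler0.
move=> s c Hs Hz.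
have /(congr1 fst) := Hz; have /(congr1 snd) := Hz; rewrite big_fst big_snd /= => Hz2 Hz1.
rewrite big_getl /= in Hz1; last by move=> i; rewrite scaler0.
rewrite big_getr /= in Hz2; last by move=> i; rewrite scaler0.
have getl_inj a b i : getl a = Some i -> getl b = Some i -> a = b :> (I1 + I2)%type.
  by case: a b => [?|?] [?|?] //= [->] [->].
have getr_inj a b i : getr a = Some i -> getr b = Some i -> a = b :> (I1 + I2)%type.
  by case: a b => [?|?] [?|?] //= [->] [->].
move=> [i|i] Hi.
  apply: (indep1 _ (fun i => c (inl i)) (NoDup_pmap getl_inj Hs) Hz1).
  exact: (In_pmap (f := @getl _ _)) Hi.
apply: (indep2 _ (fun i => c (inr i)) (NoDup_pmap getr_inj Hs) Hz2).
exact: (In_pmap (f := @getr _ _)) Hi.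
Qed.

End Basis.

Section Modules.
Variables (R : comPzRingType) (G : EICategory).
Implicit Types M N : RGmod R G.

Section Action.
Variables (M : RGmod R G) (x y : Ob G) (a : Hom y x).

Lemma mact0 : mact M a 0 = 0.
Proof. exact: (lin0 (@mact_lin _ _ M _ _ a)). Qed.

Lemma mactD u v : mact M a (u + v) = mact M a u + mact M a v.
Proof. exact: (linD (@mact_lin _ _ M _ _ a)). Qed.

Lemma mactN u : mact M a (- u) = - mact M a u.
Proof. exact: (linN (@mact_lin _ _ M _ _ a)). Qed.

Lemma mactB u v : mact M a (u - v) = mact M a u - mact M a v.
Proof. exact: (linB (@mact_lin _ _ M _ _ a)). Qed.

End Action.

Definition dsum_act M N x y (a : Hom y x) (p : (mob M x * mob N x)%type) :
  (mob M y * mob N y)%type := (mact M a p.1, mact N a p.2).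
Arguments dsum_act M N {x y}.

Section DirectSum.
Variables M N : RGmod R G.

Lemma dsum_act_lin x y (a : Hom y x) : lin (dsum_act M N a).
Proof. by move=> c u v; apply: injective_projections; apply: mact_lin. Qed.

Lemma dsum_act_id x (m : mob M x * mob N x) : dsum_act M N (idm x) m = m.
Proof. by case: m => u v; rewrite /dsum_act /= !mact_id. Qed.

Lemma dsum_act_cmp x y z (a : Hom y x) (b : Hom z y) m :
  dsum_act M N (cmp a b) m = dsum_act M N b (dsum_act M N a m).
Proof. by rewrite /dsum_act /= !mact_cmp. Qed.

Definition dsum : RGmod R G :=
  @Build_RGmod R G (fun x => (mob M x * mob N x)%type) (@dsum_act M N)
    dsum_act_lin dsum_act_id dsum_act_cmp.

End DirectSum.

Definition fin_free M : Prop :=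
  exists (I : finType) (xs : I -> Ob G) (b : forall i, mob M (xs i)),
    forall y, is_basis (fun p : {i : I & Hom y (xs i)} => mact M (projT2 p) (b (projT1 p))).

Lemma fin_free_fg M : fin_free M -> fg_free M.
Proof.
move=> [I [xs [b Mb]]].
exists #|I|, (xs \o enum_val), (fun j => b (enum_val j)) => y.
pose P i := Hom y (xs i).
pose e (q : {j : 'I_#|I| & P (enum_val j)}) := Tagged P (projT2 q).
pose e' (q : {i : I & P i}) := Tagged (P \o enum_val)
  (eq_rect _ P (projT2 q) _ (esym (enum_rankK (projT1 q)))).
apply: eq_basis (basis_reindex (e := e) (e' := e') _ _ (Mb y)) => //.
  by case=> i a; rewrite /e /e' /=; case: _ / (esym (enum_rankK i)).
case=> j a; rewrite /e /e' /=.
move: (esym (enum_rankK (enum_val j))); rewrite enum_valK => jj.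
by rewrite (eq_irrelevance jj erefl).
Qed.

Lemma fg_free_dsum M N : fg_free M -> fg_free N -> fg_free (dsum M N).
Proof.
move=> [k1 [xs1 [b1 Mb]]] [k2 [xs2 [b2 Nb]]]; apply: fin_free_fg.
pose xs (p : 'I_k1 + 'I_k2) := match p with inl i => xs1 i | inr i => xs2 i end.
exists ('I_k1 + 'I_k2)%type, xs.
exists (fun p => match p as p return mob (dsum M N) (xs p) with
                 | inl i => (b1 i, 0) | inr i => (0, b2 i) end) => y.
pose P1 i := Hom y (xs1 i); pose P2 i := Hom y (xs2 i).
pose e (q : {p : 'I_k1 + 'I_k2 & Hom y (xs p)}) :=
  let: existT p a := q in
  match p as p return Hom y (xs p) -> ({i & P1 i} + {i & P2 i})%type with
  | inl i => fun a => inl (Tagged P1 a) | inr i => fun a => inr (Tagged P2 a) end a.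
pose e' (q : ({i & P1 i} + {i & P2 i})%type) :=
  match q with
  | inl (existT i a) => Tagged (fun p => Hom y (xs p)) (a : Hom y (xs (inl i)))
  | inr (existT i a) => Tagged (fun p => Hom y (xs p)) (a : Hom y (xs (inr i))) end.
apply: eq_basis (basis_reindex (e := e) (e' := e') _ _ (basis_sum (Mb y) (Nb y))).
- by case=> [[i|i] a]; apply: injective_projections; rewrite /= ?mact0.
- by case=> [[i a]|[i a]].
- by case=> [[i|i] a].
Qed.

End Modules.

Section PhiEndomorphisms.
Variables (R : comPzRingType) (G : EICategory) (phi : Endofunctor G).
Notation PE := (@PhiEnd R G phi).
Notation K0 := (@K0eq R G phi).

Definition phi_natural_to (M N : RGmod R G) (t : forall x, mob M x -> mob N (fob phi x)) :=
  (forall x, lin (t x)) /\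
  forall x y (a : Hom y x) (m : mob M x), t y (mact M a m) = mact N (fmor phi a) (t x m).

Lemma phi_natural_to0 (M N : RGmod R G) :
  phi_natural_to (fun x (_ : mob M x) => 0 : mob N (fob phi x)).
Proof. by split=> [x c u v|x y a m]; rewrite ?mact0 ?scaler0 ?addr0. Qed.

Section TriangularSum.
Variables (A C : PE) (t : forall x, mob (pe_mod C) x -> mob (pe_mod A) (fob phi x)).
Hypothesis t_nat : phi_natural_to t.

Definition pe_dsum_map x (p : mob (dsum (pe_mod A) (pe_mod C)) x) :
    mob (dsum (pe_mod A) (pe_mod C)) (fob phi x) :=
  (pe_map p.1 + t p.2, pe_map p.2).

Lemma pe_dsum_map_nat : phi_natural pe_dsum_map.
Proof.
have [A_lin A_phi] := pe_nat A; have [C_lin C_phi] := pe_nat C; have [t_lin t_phi] := t_nat.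
split=> [x c u v|x y a m]; apply: injective_projections; rewrite /pe_dsum_map /=.
- by rewrite (linD (A_lin x)) (linZ (A_lin x)) (linD (t_lin x)) (linZ (t_lin x)) scalerDr addrACA.
- by rewrite (linD (C_lin x)) (linZ (C_lin x)).
- by rewrite A_phi t_phi mactD.
- by rewrite C_phi.
Qed.

Definition pe_dsum : PE :=
  @Build_PhiEnd R G phi (dsum (pe_mod A) (pe_mod C))
    (fg_free_dsum (pe_free A) (pe_free C)) pe_dsum_map pe_dsum_map_nat.

Lemma pe_dsum_ses : @pe_ses R G phi A pe_dsum C (fun x u => (u, 0)) (fun x p => p.2).
Proof.
have [C_lin _] := pe_nat C; have [t_lin _] := t_nat.
split; [|split].
- split; [split|] => [x c u v|x y a m|x m]; apply: injective_projections => //=.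
  + by rewrite scaler0 addr0.
  + by rewrite mact0.
  + by rewrite /pe_dsum_map /= (lin0 (t_lin x)) addr0.
  + by rewrite /pe_dsum_map /= (lin0 (C_lin x)).
- by [].
- move=> x; split; [by move=> u v [] | split=> [c|[u v]]]; first by exists (0, c).
  by split=> [/= ->|[a [_ <-]]]; first exists u.
Qed.

Lemma K0_pe_dsum b : K0 [:: (b, pe_dsum)] [:: (b, A); (b, C)].
Proof. by case: b (K0_ses pe_dsum_ses) => // /K0_negl. Qed.

End TriangularSum.

Lemma K0_pe_zero (E : PE) b : (forall x (m : mob (pe_mod E) x), m = 0) ->
  K0 [:: (b, E)] [::].
Proof.
move=> E0.
have E_ses : @pe_ses R G phi E E E (fun x u => u) (fun x u => u).
  split; [by []|split; [by []|]] => x; split; [by []|split=> [c|u]]; first by exists c.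
  by split=> [->|_]; [exists 0 | apply: E0].
have E_eq0 : K0 [:: (true, E)] [::].
  apply: K0_trans (K0_cancel E); apply: K0_trans (K0_catr _ (K0_sym (K0_ses E_ses))).
  exact/K0_sym/(K0_cat_nil [:: (true, E)])/K0_cancel.
by case: b (E_eq0) => // /K0_negl.
Qed.

End PhiEndomorphisms.

Arguments phi_natural_to0 {R G phi M N}.

Section ContractibleComplexes.
Variables (R : comPzRingType) (G : EICategory) (phi : Endofunctor G).
Notation PE := (@PhiEnd R G phi).
Notation K0 := (@K0eq R G phi).

(* In degree 0 the contraction identity [d s + s d = 1] reads [d s = 1]. *)
Local Unset Implicit Arguments.
Record ContrCx := {
  cc_mod : nat -> RGmod R G;
  cc_free : forall n, fg_free (cc_mod n);
  cc_d : forall n x, mob (cc_mod n.+1) x -> mob (cc_mod n) x;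
  cc_d_nat : forall n, natural (cc_d n);
  cc_dd : forall n x m, cc_d n x (cc_d n.+1 x m) = 0;
  cc_e : forall n x, mob (cc_mod n) x -> mob (cc_mod n) (fob phi x);
  cc_e_nat : forall n, phi_natural (cc_e n);
  cc_e_d : forall n x m, cc_e n x (cc_d n x m) = cc_d n (fob phi x) (cc_e n.+1 x m);
  cc_s : forall n x, mob (cc_mod n) x -> mob (cc_mod n.+1) x;
  cc_s_nat : forall n, natural (cc_s n);
  cc_ds0 : forall x m, cc_d 0 x (cc_s 0 x m) = m;
  cc_dsS : forall n x m, cc_d n.+1 x (cc_s n.+1 x m) + cc_s n x (cc_d n x m) = m;
  cc_len : nat;
  cc_zero : forall n, (cc_len < n)%N -> forall x (m : mob (cc_mod n) x), m = 0
}.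
Local Set Implicit Arguments.

Definition cc_pe (E : ContrCx) n : PE :=
  @Build_PhiEnd R G phi (cc_mod E n) (cc_free E n) (cc_e E n) (cc_e_nat E n).

Definition u_cc (E : ContrCx) := [seq (~~ odd n, cc_pe E n) | n <- iota 0 (cc_len E).+1].

Section Linearity.
Variable E : ContrCx.

Lemma cc_dD n x u v : cc_d E n x (u + v) = cc_d E n x u + cc_d E n x v.
Proof. exact: (linD ((cc_d_nat E n).1 x)). Qed.
Lemma cc_dZ n x a u : cc_d E n x (a *: u) = a *: cc_d E n x u.
Proof. exact: (linZ ((cc_d_nat E n).1 x)). Qed.
Lemma cc_d0 n x : cc_d E n x 0 = 0.
Proof. exact: (lin0 ((cc_d_nat E n).1 x)). Qed.
Lemma cc_dB n x u v : cc_d E n x (u - v) = cc_d E n x u - cc_d E n x v.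
Proof. exact: (linB ((cc_d_nat E n).1 x)). Qed.
Lemma cc_sD n x u v : cc_s E n x (u + v) = cc_s E n x u + cc_s E n x v.
Proof. exact: (linD ((cc_s_nat E n).1 x)). Qed.
Lemma cc_sZ n x a u : cc_s E n x (a *: u) = a *: cc_s E n x u.
Proof. exact: (linZ ((cc_s_nat E n).1 x)). Qed.
Lemma cc_s0 n x : cc_s E n x 0 = 0.
Proof. exact: (lin0 ((cc_s_nat E n).1 x)). Qed.
Lemma cc_eD n x u v : cc_e E n x (u + v) = cc_e E n x u + cc_e E n x v.
Proof. exact: (linD ((cc_e_nat E n).1 x)). Qed.
Lemma cc_eZ n x a u : cc_e E n x (a *: u) = a *: cc_e E n x u.
Proof. exact: (linZ ((cc_e_nat E n).1 x)). Qed.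
Lemma cc_e0 n x : cc_e E n x 0 = 0.
Proof. exact: (lin0 ((cc_e_nat E n).1 x)). Qed.

Lemma cc_ds_cycle n x m : cc_d E n x m = 0 -> cc_d E n.+1 x (cc_s E n.+1 x m) = m.
Proof. by move=> dm0; have := cc_dsS E n x m; rewrite dm0 cc_s0 addr0. Qed.

End Linearity.

Section Shift.
Variable E : ContrCx.
Hypothesis len2 : (2 <= cc_len E)%N.

(* [e s - s e] is a cycle of degree 1, so [s] lifts it through [d]; this corner makes
   the phi-endomorphism of degree 1 commute with the new differential. *)
Definition sh_corner x (v : mob (cc_mod E 0) x) : mob (cc_mod E 2) (fob phi x) :=
  cc_s E 1 (fob phi x) (cc_e E 1 x (cc_s E 0 x v) - cc_s E 0 (fob phi x) (cc_e E 0 x v)).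

Lemma sh_corner_nat : phi_natural_to (M := cc_mod E 0) (N := cc_mod E 2) sh_corner.
Proof.
split=> [x|x y a m]; rewrite /sh_corner.
  apply: lin_of_morph => [u v|a u].
    by rewrite -cc_sD; congr (cc_s E 1 _ _); rewrite !cc_sD !cc_eD !cc_sD opprD addrACA.
  by rewrite cc_sZ cc_eZ cc_eZ cc_sZ -scalerBr cc_sZ.
rewrite (cc_s_nat E 0).2 (cc_e_nat E 1).2 (cc_e_nat E 0).2 (cc_s_nat E 0).2.
by rewrite -mactB (cc_s_nat E 1).2.
Qed.

Lemma d_sh_corner x v : cc_d E 1 (fob phi x) (sh_corner v) =
   cc_e E 1 x (cc_s E 0 x v) - cc_s E 0 (fob phi x) (cc_e E 0 x v).
Proof. by apply: cc_ds_cycle; rewrite cc_dB -cc_e_d !cc_ds0 subrr. Qed.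

Local Unset Implicit Arguments.
Definition sh_mod n : RGmod R G :=
  match n with 0 => cc_mod E 1 | 1 => dsum (cc_mod E 2) (cc_mod E 0) | k.+2 => cc_mod E k.+3 end.

Definition sh_free n : fg_free (sh_mod n) :=
  match n with
  | 0 => cc_free E 1
  | 1 => fg_free_dsum (cc_free E 2) (cc_free E 0)
  | k.+2 => cc_free E k.+3 end.

Definition sh_d n x : mob (sh_mod n.+1) x -> mob (sh_mod n) x :=
  match n as n return mob (sh_mod n.+1) x -> mob (sh_mod n) x with
  | 0 => fun p => cc_d E 1 x p.1 + cc_s E 0 x p.2
  | 1 => fun z => (cc_d E 2 x z, 0)
  | k.+2 => cc_d E k.+3 x end.

Definition sh_e n x : mob (sh_mod n) x -> mob (sh_mod n) (fob phi x) :=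
  match n as n return mob (sh_mod n) x -> mob (sh_mod n) (fob phi x) with
  | 0 => cc_e E 1 x
  | 1 => @pe_dsum_map R G phi (cc_pe E 2) (cc_pe E 0) sh_corner x
  | k.+2 => cc_e E k.+3 x end.

Definition sh_e_nat n : phi_natural (sh_e n) :=
  match n as n return phi_natural (sh_e n) with
  | 0 => cc_e_nat E 1
  | 1 => @pe_dsum_map_nat R G phi (cc_pe E 2) (cc_pe E 0) sh_corner sh_corner_nat
  | k.+2 => cc_e_nat E k.+3 end.

Definition sh_s n x : mob (sh_mod n) x -> mob (sh_mod n.+1) x :=
  match n as n return mob (sh_mod n) x -> mob (sh_mod n.+1) x with
  | 0 => fun y => (cc_s E 1 x y, cc_d E 0 x y)
  | 1 => fun p => cc_s E 2 x p.1 - cc_s E 2 x (cc_s E 1 x (cc_s E 0 x p.2))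
  | k.+2 => cc_s E k.+3 x end.
Local Set Implicit Arguments.

Lemma sh_d_nat n : natural (sh_d n).
Proof.
case: n => [|[|k]] /=; last exact: cc_d_nat.
- split=> [x|x y a [u v] /=]; last by rewrite (cc_d_nat E 1).2 (cc_s_nat E 0).2 mactD.
  apply: lin_of_morph => [[u1 u2] [v1 v2]|a [u1 u2]] /=.
    by rewrite cc_dD cc_sD addrACA.
  by rewrite cc_dZ cc_sZ scalerDr.
- split=> [x|x y a u]; last by apply: injective_projections; rewrite /= ?mact0 ?(cc_d_nat E 2).2.
  apply: lin_of_morph => [u v|a u]; apply: injective_projections;
    by rewrite /= ?cc_dD ?cc_dZ ?addr0 ?scaler0.
Qed.

Lemma sh_dd n x m : sh_d n x (sh_d n.+1 x m) = 0.
Proof.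
case: n m => [|[|k]] m /=; last exact: cc_dd.
- by rewrite cc_dd cc_s0 addr0.
- by apply: injective_projections; rewrite //= cc_dd.
Qed.

Lemma sh_e_d n x m : sh_e n x (sh_d n x m) = sh_d n (fob phi x) (sh_e n.+1 x m).
Proof.
case: n m => [|[|k]] m /=; last exact: cc_e_d.
- case: m => [u v]; rewrite /pe_dsum_map /=.
  by rewrite cc_eD cc_e_d cc_dD d_sh_corner addrA subrK.
- apply: injective_projections; rewrite /pe_dsum_map /= ?cc_e0 //.
  by rewrite cc_e_d /sh_corner !(cc_s0, cc_e0) subr0 cc_s0 addr0.
Qed.

Lemma sh_s_nat n : natural (sh_s n).
Proof.
case: n => [|[|k]] /=; last exact: cc_s_nat.
- split=> [x|x y a u]; last first.
    by apply: injective_projections; rewrite /= ?(cc_s_nat E 1).2 ?(cc_d_nat E 0).2.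
  apply: lin_of_morph => [u v|a u]; apply: injective_projections;
    by rewrite /= ?cc_sD ?cc_dD ?cc_sZ ?cc_dZ.
- split=> [x|x y a [u v] /=]; last first.
    by rewrite (cc_s_nat E 0).2 (cc_s_nat E 1).2 !(cc_s_nat E 2).2 mactB.
  apply: lin_of_morph => [[u1 u2] [v1 v2]|a [u1 u2]] /=.
    by rewrite !cc_sD opprD addrACA.
  by rewrite !cc_sZ scalerBr.
Qed.

Lemma sh_ds0 x m : sh_d 0 x (sh_s 0 x m) = m.
Proof. exact: cc_dsS. Qed.

Lemma sh_dsS n x m : sh_d n.+1 x (sh_s n.+1 x m) + sh_s n x (sh_d n x m) = m.
Proof.
case: n m => [|[|k]] m /=; last exact: cc_dsS.
- case: m => [y v]; apply: injective_projections => /=; last first.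
    by rewrite add0r cc_dD cc_dd add0r cc_ds0.
  have s0v_cycle : cc_d E 1 x (cc_s E 1 x (cc_s E 0 x v)) = 0.
    have := cc_dsS E 0 x (cc_s E 0 x v); rewrite cc_ds0 -{3}[cc_s E 0 x v]add0r.
    exact: addIr.
  rewrite cc_dB (cc_ds_cycle s0v_cycle) cc_sD [_ + cc_s E 1 x _]addrC addrA subrK.
  exact: cc_dsS.
- by rewrite !cc_s0 subr0 cc_dsS.
Qed.

Lemma sh_zero n : ((cc_len E).-1 < n)%N -> forall x (m : mob (sh_mod n) x), m = 0.
Proof.
move: len2; case: n => [|[|k]] len2' len_n x m; try by move: len2' len_n; lia.
by apply: (cc_zero E k.+3); move: len2' len_n; lia.
Qed.

Definition cc_shift : ContrCx :=
  @Build_ContrCx sh_mod sh_free sh_d sh_d_nat sh_dd sh_e sh_e_nat sh_e_d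
    sh_s sh_s_nat sh_ds0 sh_dsS (cc_len E).-1 sh_zero.

Lemma u_cc_shift : K0 (u_cc E) (negl (u_cc cc_shift)).
Proof.
have [l lenE] : exists l, cc_len E = l.+2 by move: len2; case: (cc_len E) => [|[|l]] //; exists l.
have shift_tail m : [seq (~~ odd n, cc_pe cc_shift n) | n <- iota m.+2 l] =
                    negl [seq (~~ odd n, cc_pe E n) | n <- iota m.+3 l].
  by elim: l m {lenE} => [|l IH] m //=; rewrite IH !negbK.
rewrite /u_cc /= lenE /= shift_tail neglK.
set T := [seq _ | _ <- iota 3 l].
apply: K0_sym; apply: (K0_trans (K0_catl [:: (false, cc_pe E 1)]
  (K0_catr T (@K0_pe_dsum _ _ _ (cc_pe E 2) (cc_pe E 0) _ sh_corner_nat true)))).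
apply: K0_perm => /=.
exact: Permutation_sym (Permutation_middle [:: _; _] _ _).
Qed.

End Shift.

Lemma u_cc_len0 (E : ContrCx) : cc_len E = 0%N -> K0 (u_cc E) [::].
Proof.
move=> lenE; rewrite /u_cc lenE; apply: K0_pe_zero => x m.
by rewrite -(cc_ds0 E x m) (cc_zero E 1 _ x (cc_s E 0 x m)) ?lenE // cc_d0.
Qed.

Lemma u_cc_len1 (E : ContrCx) : cc_len E = 1%N -> K0 (u_cc E) [::].
Proof.
move=> lenE; rewrite /u_cc lenE /=.
have sdK x (w : mob (cc_mod E 1) x) : cc_s E 0 x (cc_d E 0 x w) = w.
  by have := cc_dsS E 0 x w; rewrite (cc_zero E 2 _ x (cc_s E 1 x w)) ?lenE // cc_d0 add0r.
have d_iso : pe_iso (cc_pe E 1) (cc_pe E 0).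
  exists (cc_d E 0), (cc_s E 0); split; [|split; [|split]] => //.
  - by split=> [|x m /=]; [exact: cc_d_nat | rewrite cc_e_d].
  - split=> [|x m /=]; first exact: cc_s_nat.
    by rewrite -[in LHS](sdK _ (cc_e E 1 x _)) -cc_e_d cc_ds0.
  - exact: cc_ds0.
exact: K0_trans (K0_catr [:: (false, cc_pe E 1)] (K0_sym (K0_iso d_iso))) (K0_cancel _).
Qed.

Theorem u_cc_eq0 (E : ContrCx) : K0 (u_cc E) [::].
Proof.
move: {2}(cc_len E) (leqnn (cc_len E)) => N; elim: N E => [|N IH] E lenE.
  by apply: u_cc_len0; move: lenE; case: (cc_len E).
case lenE': (cc_len E) => [|[|l]]; [exact: u_cc_len0 | exact: u_cc_len1 |].
have len2 : (2 <= cc_len E)%N by rewrite lenE'.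
apply: K0_trans (u_cc_shift len2) _.
by apply: (K0_negl (l' := [::])); apply: IH; rewrite /= lenE'; move: lenE; rewrite lenE'.
Qed.

End ContractibleComplexes.

Lemma odd_dist (i c : nat) : odd `|i%:Z - c%:Z| = odd i (+) odd c.
Proof.
case: (leqP c i) => [ci|/ltnW ic]; first by rewrite distnEl // oddB.
by rewrite distnEr // oddB // addbC.
Qed.

Section Windows.
Variables (R : comPzRingType) (G : EICategory) (phi : Endofunctor G).
Notation PE := (@PhiEnd R G phi).
Notation K0 := (@K0eq R G phi).

Lemma K0_map_zero (T : eqType) (s : seq T) (F : T -> bool * PE) :
  (forall j, j \in s -> forall y (m : mob (pe_mod (F j).2) y), m = 0) ->
  K0 (map F s) [::].
Proof.
elim: s => [|j s IH] F0 /=; first exact: K0_refl.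
apply: (K0_app (l1 := [:: F j]) (l2 := [::]) (l4 := [::])).
  by case: (F j) (F0 j (mem_head _ _)) => b E; apply: K0_pe_zero.
by apply: IH => j' sj'; apply: F0; rewrite inE sj' orbT.
Qed.

Variables (X : Complex R G) (fx : phi_cmap_type phi X) (Hfx : phi_chain_map fx).

Definition u_window (B L : nat) : seq (bool * PE) :=
  [seq (~~ (odd j (+) odd B), pe_of Hfx (j%:Z - B%:Z)) | j <- iota 0 L].

Lemma u_of_window (B L : nat) : (cbound X <= B)%N -> (B + cbound X < L)%N ->
  K0 (u_window B L) (u_of Hfx).
Proof.
move=> cB BcL; set c := cbound X; set a := (B - c)%N.
have -> : L = (a + (2 * c).+1 + (L - B - c - 1))%N by rewrite /a; lia.
rewrite /u_window !iotaD !map_cat add0n.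
set F := fun j : nat => _.
have outside j : (j < a)%N || (a + (2 * c).+1 <= j)%N ->
    forall y (m : mob (pe_mod (F j).2) y), m = 0.
  by move=> ja y; apply: (cbound_spec _ _ X); move: ja; rewrite /a; lia.
have <- : map F (iota a (2 * c).+1) = u_of Hfx.
  rewrite /u_of -map_comp -[X in iota X _]addn0 iotaDl -map_comp; apply: eq_map => i /=.
  by rewrite /F -odd_dist (_ : (a + i)%N%:Z - B%:Z = i%:Z - c%:Z) // /a; lia.
apply: K0_trans (K0_app (K0_app _ (K0_refl _)) _) _.
- by apply: K0_map_zero => j; rewrite mem_iota => /andP[_ ja]; apply: outside; rewrite ja.
- by apply: K0_map_zero => j; rewrite mem_iota => /andP[ja _]; apply: outside; rewrite ja orbT.
- by rewrite cats0; apply: K0_refl.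
Qed.

End Windows.

Section MappingCone.
Local Unset Implicit Arguments.
Variables (R : comPzRingType) (G : EICategory) (phi : Endofunctor G).
Variables (C D : Complex R G).
Variables (f : phi_cmap_type phi C) (Hf : phi_chain_map f).
Variables (g : phi_cmap_type phi D) (Hg : phi_chain_map g).
Variables (h : cmap_type C D) (h_chain : chain_map h).
Variables (k : cmap_type D C) (k_chain : chain_map k).
Variables (sC : homotopy_type C C) (sD : homotopy_type D D).
Hypothesis sC_nat : forall n, natural (sC n).
Hypothesis sD_nat : forall n, natural (sD n).
Hypothesis kh_htpy : forall n x (m : mob (cmod C (n + 1)) x),
  k (n + 1) x (h (n + 1) x m) - m = cd C (n + 1) x (sC (n + 1) x m) + sC n x (cd C n x m).
Hypothesis hk_htpy : forall n x (m : mob (cmod D (n + 1)) x),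
  h (n + 1) x (k (n + 1) x m) - m = cd D (n + 1) x (sD (n + 1) x m) + sD n x (cd D n x m).
Hypothesis gh : forall n x (m : mob (cmod C n) x),
  g n x (h n x m) = h n (fob phi x) (f n x m).

Let dC_lin i x : lin (cd C i x) := (cd_nat _ _ C i).1 x.
Let dD_lin i x : lin (cd D i x) := (cd_nat _ _ D i).1 x.
Let h_lin i x : lin (h i x) := (h_chain.1 i).1 x.
Let k_lin i x : lin (k i x) := (k_chain.1 i).1 x.
Let sC_lin i x : lin (sC i x) := (sC_nat i).1 x.
Let sD_lin i x : lin (sD i x) := (sD_nat i).1 x.
Let f_lin i x : lin (f i x) := (Hf.1 i).1 x.
Let g_lin i x : lin (g i x) := (Hg.1 i).1 x.

Definition cone_mod (i : int) : RGmod R G := dsum (cmod D (i + 1)) (cmod C i).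

Definition cone_d i x (p : mob (cone_mod (i + 1)) x) : mob (cone_mod i) x :=
  (cd D (i + 1) x p.1 + h (i + 1) x p.2, - cd C i x p.2).

Definition cone_e i x (p : mob (cone_mod i) x) : mob (cone_mod i) (fob phi x) :=
  pe_dsum_map (A := pe_of Hg (i + 1)) (C := pe_of Hf i) (fun _ _ => 0) p.

Definition cone_e_nat i : phi_natural (cone_e i) :=
  pe_dsum_map_nat (A := pe_of Hg (i + 1)) (C := pe_of Hf i) phi_natural_to0.

(* [cone_s0] is a contraction only up to the error [cone_err], which commutes with [d] and
   squares to zero; hence [cone_s0 (1 - cone_err)] is a contraction. *)
Definition cone_s0 i x (p : mob (cone_mod i) x) : mob (cone_mod (i + 1)) x :=
  (- sD (i + 1) x p.1, k (i + 1) x p.1 + sC i x p.2).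

Definition cone_err i x (p : mob (cone_mod i) x) : mob (cone_mod i) x :=
  (h (i + 1) x (sC i x p.2) - sD i x (h i x p.2), 0).

Definition cone_s i x (p : mob (cone_mod i) x) : mob (cone_mod (i + 1)) x :=
  cone_s0 i x (p - cone_err i x p).

Lemma cone_d_nat i : natural (cone_d i).
Proof.
split=> [x|x y a [u v]]; last first.
  by apply: injective_projections; rewrite /cone_d /= ?mactD ?mactN
    ?(cd_nat _ _ D _).2 ?(cd_nat _ _ C _).2 ?(h_chain.1 _).2.
apply: lin_of_morph => [[u1 u2] [v1 v2]|a [u1 u2]]; apply: injective_projections;
  rewrite /cone_d /=.
- by rewrite (linD (dD_lin _ _)) (linD (h_lin _ _)) addrACA.
- by rewrite (linD (dC_lin _ _)) opprD.
- by rewrite (linZ (dD_lin _ _)) (linZ (h_lin _ _)) scalerDr.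
- by rewrite (linZ (dC_lin _ _)) scalerN.
Qed.

Lemma cone_dd i x (m : mob (cone_mod (i + 1 + 1)) x) : cone_d i x (cone_d (i + 1) x m) = 0.
Proof.
case: m => y z; apply: injective_projections; rewrite /cone_d /=.
  by rewrite (linD (dD_lin _ _)) cdd add0r (linN (h_lin _ _)) (h_chain.2 (i + 1)) subrr.
by rewrite (linN (dC_lin _ _)) opprK cdd.
Qed.

Lemma cone_e_d i x (m : mob (cone_mod (i + 1)) x) :
  cone_e i x (cone_d i x m) = cone_d i (fob phi x) (cone_e (i + 1) x m).
Proof.
case: m => y z; apply: injective_projections; rewrite /cone_e /pe_dsum_map /cone_d /=.
  by rewrite !addr0 (linD (g_lin _ _)) (Hg.2 (i + 1)) gh.
by rewrite (linN (f_lin _ _)) (Hf.2 i).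
Qed.

Lemma cone_s0_nat i : natural (cone_s0 i).
Proof.
split=> [x|x y a [u v]]; last first.
  by apply: injective_projections; rewrite /cone_s0 /= ?mactD ?mactN
    ?(sD_nat _).2 ?(sC_nat _).2 ?(k_chain.1 _).2.
apply: lin_of_morph => [[u1 u2] [v1 v2]|a [u1 u2]]; apply: injective_projections;
  rewrite /cone_s0 /=.
- by rewrite (linD (sD_lin _ _)) opprD.
- by rewrite (linD (k_lin _ _)) (linD (sC_lin _ _)) addrACA.
- by rewrite (linZ (sD_lin _ _)) scalerN.
- by rewrite (linZ (k_lin _ _)) (linZ (sC_lin _ _)) scalerDr.
Qed.

Lemma cone_err_nat i : natural (cone_err i).
Proof.
split=> [x|x y a [u v]]; last first.
  apply: injective_projections; rewrite /cone_err /= ?mact0 //.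
  by rewrite (sC_nat _).2 !(h_chain.1 _).2 (sD_nat _).2 mactB.
apply: lin_of_morph => [[u1 u2] [v1 v2]|a [u1 u2]]; apply: injective_projections;
  rewrite /cone_err /= ?addr0 ?scaler0 //.
- by rewrite (linD (sC_lin _ _)) !(linD (h_lin _ _)) (linD (sD_lin _ _)) opprD addrACA.
- by rewrite (linZ (sC_lin _ _)) !(linZ (h_lin _ _)) (linZ (sD_lin _ _)) scalerBr.
Qed.

Lemma cone_s_nat i : natural (cone_s i).
Proof.
have [s0_lin s0_nat] := cone_s0_nat i; have [err_lin err_nat] := cone_err_nat i.
split=> [x|x y a u]; rewrite /cone_s; last by rewrite err_nat -mactB s0_nat.
apply: lin_of_morph => [u v|a u]; rewrite -?(linD (s0_lin x)) -?(linZ (s0_lin x)).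
  by rewrite (linD (err_lin x)) opprD addrACA.
by rewrite (linZ (err_lin x)) scalerBr.
Qed.

Lemma cone_ds0_htpy i x (w : mob (cone_mod (i + 1)) x) :
  cone_d (i + 1) x (cone_s0 (i + 1) x w) + cone_s0 i x (cone_d i x w) =
  w + cone_err (i + 1) x w.
Proof.
have cancelD (V : zmodType) (A B y P Q : V) : - A + (A + B + y + P) - (B + Q) = y + (P - Q).
  by rewrite -!addrA addKr opprD addrCA [B + _]addrCA addNKr.
have cancelC (V : zmodType) (K S1 S2 z : V) : - (K + S1) + (K + (S1 + S2 + z) - S2) = z + 0.
  by rewrite addr0 opprD -!addrA [- S1 + _]addrCA !addKr addrCA subrr addr0.
case: w => y z; apply: injective_projections; rewrite /cone_d /cone_s0 /cone_err /=.
  rewrite (linN (dD_lin _ _)) (linD (h_lin _ _)) (linD (sD_lin _ _)).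
  by rewrite -[h _ _ (k _ _ y)](subrK y) hk_htpy cancelD.
rewrite (linD (dC_lin _ _)) (linD (k_lin _ _)) (linN (sC_lin _ _)) (k_chain.2 (i + 1)).
by rewrite -[k _ _ (h _ _ z)](subrK z) kh_htpy cancelC.
Qed.

Lemma cone_err_d i x (w : mob (cone_mod (i + 1)) x) :
  cone_err i x (cone_d i x w) = cone_d i x (cone_err (i + 1) x w).
Proof.
case: w => y z; apply: injective_projections; rewrite /cone_d /cone_err /=; last first.
  by rewrite (lin0 (dC_lin _ _)) oppr0.
rewrite (lin0 (h_lin _ _)) addr0 (linB (dD_lin _ _)) -(h_chain.2 (i + 1)).
have dsCz : cd C (i + 1) x (sC (i + 1) x z) =
    k (i + 1) x (h (i + 1) x z) - z - sC i x (cd C i x z) by rewrite kh_htpy addrK.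
have dsDhz : cd D (i + 1) x (sD (i + 1) x (h (i + 1) x z)) =
    h (i + 1) x (k (i + 1) x (h (i + 1) x z)) - h (i + 1) x z - sD i x (cd D i x (h (i + 1) x z)).
  by rewrite hk_htpy addrK.
have cancel (V : zmodType) (X P Q : V) : - P - - Q = (X - P) - (X - Q).
  by rewrite opprK opprB [RHS]addrC -[RHS]addrA addKr addrC.
rewrite dsCz dsDhz -(h_chain.2 i) !(linB (h_lin _ _)) (linN (sC_lin _ _)) !(linN (h_lin _ _)).
by rewrite (linN (sD_lin _ _)) -cancel.
Qed.

Lemma cone_err2 i x (p : mob (cone_mod i) x) : cone_err i x (cone_err i x p) = 0.
Proof.
apply: injective_projections; rewrite /cone_err //=.
by rewrite (lin0 (sC_lin _ _)) !(lin0 (h_lin _ _)) (lin0 (sD_lin _ _)) subr0.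
Qed.

Lemma cone_ds i x (m : mob (cone_mod (i + 1)) x) :
  cone_d (i + 1) x (cone_s (i + 1) x m) + cone_s i x (cone_d i x m) = m.
Proof.
rewrite /cone_s cone_err_d -(linB ((cone_d_nat i).1 x)) cone_ds0_htpy.
by rewrite (linB ((cone_err_nat _).1 x)) cone_err2 subr0 subrK.
Qed.

Variable B : nat.
Hypothesis B_gt : (maxn (cbound C) (cbound D) < B)%N.

(* Iterating [+ 1] makes [cone_idx n.+1] convertible to [cone_idx n + 1]. *)
Definition cone_idx (n : nat) : int := iter n.+1 (fun i => i + 1) (- B%:Z - 1).

Lemma cone_idxE n : cone_idx n = n%:Z - B%:Z.
Proof.
elim: n => [|n IH]; first by rewrite /cone_idx /= subrK sub0r.
by rewrite /cone_idx iterS -/(cone_idx n) IH -addrAC -[n.+1]addn1 PoszD.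
Qed.

Lemma cone_mod_zero (i : int) :
  (i + 1 < - (cbound D)%:Z) \/ ((cbound D)%:Z < i + 1) ->
  (i < - (cbound C)%:Z) \/ ((cbound C)%:Z < i) ->
  forall x (m : mob (cone_mod i) x), m = 0.
Proof.
move=> Dout Cout x [u v]; apply: injective_projections => /=.
  exact: (cbound_spec _ _ D _ Dout x u).
exact: (cbound_spec _ _ C _ Cout x v).
Qed.

Lemma cone_ds_bottom x (m : mob (cone_mod (cone_idx 0)) x) :
  cone_d (cone_idx 0) x (cone_s (cone_idx 0) x m) = m.
Proof.
have := cone_ds (- B%:Z - 1) x m.
by rewrite (cone_mod_zero _ _ _ x (cone_d _ x m)) ?(lin0 ((cone_s_nat _).1 x)) ?addr0 //;
  left; move: B_gt; lia.
Qed.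

Lemma cone_zero_top n : (2 * B < n)%N -> forall x (m : mob (cone_mod (cone_idx n)) x), m = 0.
Proof. by move=> n_gt; apply: cone_mod_zero; rewrite cone_idxE; right; move: B_gt n_gt; lia. Qed.

Definition cone_cc : @ContrCx R G phi :=
  @Build_ContrCx R G phi (fun n => cone_mod (cone_idx n))
    (fun n => fg_free_dsum (cfree D (cone_idx n + 1)) (cfree C (cone_idx n)))
    (fun n => cone_d (cone_idx n)) (fun n => cone_d_nat (cone_idx n))
    (fun n => cone_dd (cone_idx n))
    (fun n => cone_e (cone_idx n)) (fun n => cone_e_nat (cone_idx n))
    (fun n => cone_e_d (cone_idx n))
    (fun n => cone_s (cone_idx n)) (fun n => cone_s_nat (cone_idx n))
    cone_ds_bottom (fun n => cone_ds (cone_idx n))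
    (2 * B)%N cone_zero_top.

Hypothesis B_even : ~~ odd B.

Lemma u_cone_cc : K0eq (u_cc cone_cc)
  (negl (u_window Hg B.-1 (2 * B).+1) ++ u_window Hf B (2 * B).+1).
Proof.
rewrite /u_cc -flatten_map1.
apply: (K0_trans (K0_flatten
  (F' := fun n => [:: (~~ odd n, pe_of Hg (cone_idx n + 1)); (~~ odd n, pe_of Hf (cone_idx n))])
  _ _)).
  by move=> n; apply: (K0_pe_dsum (A := pe_of Hg _) (C := pe_of Hf _) phi_natural_to0).
apply/K0_perm/(Permutation_trans (perm_flatten_pairs _ _ _)).
have odd_Bm1 : odd B.-1 by move: B_gt B_even; case: B => [|b] //= _; rewrite negbK.
have -> : [seq (~~ odd n, pe_of Hg (cone_idx n + 1)) | n <- iota 0 (2 * B).+1] =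
          negl (u_window Hg B.-1 (2 * B).+1).
  rewrite /negl -map_comp; apply: eq_map => n /=; rewrite odd_Bm1 addbT negbK cone_idxE.
  by rewrite (_ : n%:Z - B%:Z + 1 = n%:Z - B.-1%:Z) //; move: B_gt; lia.
have -> : [seq (~~ odd n, pe_of Hf (cone_idx n)) | n <- iota 0 (2 * B).+1] =
          u_window Hf B (2 * B).+1.
  by apply: eq_map => n; rewrite (negbTE B_even) addbF cone_idxE.
exact: Permutation_refl.
Qed.

End MappingCone.

Arguments cone_cc {R G phi C D f} Hf {g} Hg {h} h_chain {k} k_chain {sC sD}
  sC_nat sD_nat kh_htpy hk_htpy gh {B} B_gt.
Arguments u_cone_cc {R G phi C D f} Hf {g} Hg {h} h_chain {k} k_chain {sC sD}
  sC_nat sD_nat kh_htpy hk_htpy gh {B} B_gt B_even.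

Theorem lemma1p7 (R : comPzRingType) (G : EICategory) (phi : Endofunctor G)
  (C D : Complex R G)
  (f : phi_cmap_type phi C) (Hf : phi_chain_map f)
  (g : phi_cmap_type phi D) (Hg : phi_chain_map g)
  (h : cmap_type C D) (Hh : chain_hequiv h)
  (Hgh : forall n x (m : mob (cmod C n) x),
           g n x (h n x m) = h n (fob phi x) (f n x m)) :
  K0eq (u_of Hf) (u_of Hg).
Proof.
have [h_chain [k [k_chain [[sC [sC_nat kh]] [sD [sD_nat hk]]]]]] := Hh.
have [B [B_gt B_even]] : exists B, (maxn (cbound C) (cbound D) < B)%N /\ ~~ odd B.
  by exists (2 * (maxn (cbound C) (cbound D)).+1)%N; rewrite oddM; split=> //; lia.
have uD : K0eq (u_window Hg B.-1 (2 * B).+1) (u_of Hg) by apply: u_of_window; lia.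
have uC : K0eq (u_window Hf B (2 * B).+1) (u_of Hf) by apply: u_of_window; lia.
have u_cone0 := K0_trans
  (K0_sym (u_cone_cc Hf Hg h_chain k_chain sC_nat sD_nat kh hk Hgh B_gt B_even))
  (u_cc_eq0 (cone_cc Hf Hg h_chain k_chain sC_nat sD_nat kh hk Hgh B_gt)).
apply: K0_of_sub0; apply: K0_trans u_cone0.
apply: (K0_trans (K0_perm (Permutation_app_comm (u_of Hf) _))).
exact: K0_app (K0_negl (K0_sym uD)) (K0_sym uC).
Qed.
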